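(* Let $G$ be a finite connected unweighted graph with $E\ge1$ edges, enumerated as $e_1,\dots,e_E$, and let $M\in\mathbb{N}$. Define the graph $H=H(G,M)$ as follows. For each vertex $u$ of $G$ take a path (''short path'') $p_u$ with vertices $(u,1),(u,2),\dots,(u,E)$, consecutive ones adjacent; these paths are disjoint. For each edge $e_i=uv$ of $G$ add a path of length $M$ (with $M-1$ new internal vertices) joining $(u,i)$ and $(v,i)$; these ''long paths'' are internally disjoint from each other and from the short paths. Then $H$ has maximum degree at most $3$. Fix $i_0\in\{1,\dots,E\}$ and define $\psi:V(G)\to V(H)$ by $\psi(u)=(u,i_0)$. Then, with shortest path metrics $d_G,d_H$, for all vertices $u,v$ of $G$: $$M\,d_G(u,v)\le d_H(\psi(u),\psi(v))\le (2E+M)\,d_G(u,v).$$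
   Context: Graphs carry the shortest path metric; the length of a path is its number of edges. *)

From mathcomp Require Import all_boot.
Set Implicit Arguments. Unset Strict Implicit. Unset Printing Implicit Defensive.

Definition walkb (T : finType) (e : rel T) (x y : T) (n : nat) : bool :=
  [exists p : n.-tuple T, path e x p && (last x p == y)].

(* In a connected graph on T a shortest walk has length
   < #|T|, so searching n in [0, #|T|) suffices; for unreachable pairs the
   value #|T| is a meaningless default (never used here: both graphs are
   connected). *)
Definition dist (T : finType) (e : rel T) (x y : T) : nat :=
  find (walkb e x y) (iota 0 #|T|).

(* Vertices of H(G,M): short-path vertices (u,i), and internal vertices
   (i,k) of the long path of edge e_i, k : 'I_(M-1) being the (k+1)-th
   internal vertex counted from the endpoint (fst (ed i), i). *)
Definition HV (T : finType) (E M : nat) : finType :=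
  ((T * 'I_E) + ('I_E * 'I_M.-1))%type.

(* Adjacency of H(G,M); ed : 'I_E -> T * T is the edge enumeration,
   long path i joins ((ed i).1, i) to ((ed i).2, i). *)
Arguments HV : clear implicits.
Definition Hadj (T : finType) (E M : nat) (ed : 'I_E -> T * T) :
    rel (HV T E M) :=
  fun x y =>
  match x, y with
  | inl (a, j), inl (b, j') =>
      ((a == b) && ((j.+1 == j' :> nat) || (j'.+1 == j :> nat)))
      || ((j == j') && (M == 1)
          && (((a, b) == ed j) || ((b, a) == ed j)))
  | inl (a, j), inr (i, k) =>
      (i == j) && (((a == (ed i).1) && (k == 0 :> nat))
                   || ((a == (ed i).2) && (k.+2 == M)))
  | inr (i, k), inl (a, j) =>
      (i == j) && (((a == (ed i).1) && (k == 0 :> nat))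
                   || ((a == (ed i).2) && (k.+2 == M)))
  | inr (i, k), inr (i', k') =>
      (i == i') && ((k.+1 == k' :> nat) || (k'.+1 == k :> nat))
  end.
Arguments Hadj {T E} M ed _ _.

(* A neighbour of a vertex of H differs from it by one step of an
      index along a path, or is the unique neighbour across the long path; so
      every vertex has at most three neighbours.
   3. Upper bound.  An edge az of G is simulated in H by walking along the short
      path of a to the index of az, along its long path, and back along the short
      path of z: at most 2E + M steps.  A potential argument: along any H-walk of length n ending at
      (b,j'), every short vertex (a,j) sees a G-walk from a to b of length k with
      M k <= n, and an internal vertex of the long path of e_i sees such walks
      from both endpoints, offset by its distances to them. *)
From mathcomp Require Import all_boot zify.
Set Implicit Arguments. Unset Strict Implicit. Unset Printing Implicit Defensive.

Section Walks.
Variables (V : finType) (r : rel V).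

Definition walk (x y : V) (n : nat) : Prop :=
  exists p : seq V, [/\ size p = n, path r x p & last x p = y].

Lemma walkbP x y n : walkb r x y n <-> walk x y n.
Proof.
split.
  case/existsP=> t /andP[hp /eqP hl]; exists (val t); split => //.
  exact: size_tuple.
move=> [p [hs hp hl]]; apply/existsP; exists (Tuple (introT eqP hs)) => /=.
by rewrite hp hl eqxx.
Qed.

(* The distance is bounded by the length of any walk (if n >= #|V| this is
   just the bound on the search range). *)
Lemma dist_le x y n : walk x y n -> dist r x y <= n.
Proof.
move=> hw; rewrite /dist.
case: (ltnP n #|V|) => hn.
  rewrite leqNgt; apply/negP => /(before_find 0).
  by rewrite nth_iota // add0n => /negbT/negP; apply; apply/walkbP.
by apply: leq_trans (find_size _ _) _; rewrite size_iota.
Qed.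

(* If y is reachable from x, the distance is realised by a walk: removing the
   loops of a walk gives a duplicate-free one, of length < #|V|. *)
Lemma dist_walk x y n : walk x y n -> walk x y (dist r x y).
Proof.
move=> [p [_ hp hl]]; move: hl; case/shortenP: hp => p' hp' hu _ hl.
have short_p' : size p' < #|V| by move/card_uniqP: hu => /= <-; exact: max_card.
have has_walk : has (walkb r x y) (iota 0 #|V|).
  by apply/hasP; exists (size p'); [rewrite mem_iota | apply/walkbP; exists p'].
have := nth_find 0 has_walk; rewrite nth_iota ?add0n; first by move/walkbP.
by move: has_walk; rewrite has_find size_iota.
Qed.

Lemma walk0 x : walk x x 0.
Proof. by exists [::]. Qed.

Lemma walk_cons x y z n : r x y -> walk y z n -> walk x z n.+1.
Proof.
move=> hxy [p [hs hp hl]]; exists (y :: p); split => //=; first by rewrite hs.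
by rewrite hxy.
Qed.

Lemma walk_snoc x y z n : walk x y n -> r y z -> walk x z n.+1.
Proof.
move=> [p [hs hp hl]] hyz; exists (rcons p z).
by rewrite size_rcons rcons_path last_rcons hs hp hl.
Qed.

Lemma walk_cat x y z m n : walk x y m -> walk y z n -> walk x z (m + n).
Proof.
move=> [p [hs hp hl]] [q [hs' hq hl']]; exists (p ++ q).
by rewrite size_cat cat_path last_cat hs hs' hp hl hq hl'.
Qed.

Lemma walk_rev : symmetric r -> forall x y n, walk x y n -> walk y x n.
Proof.
move=> r_sym x y n [p [<- hp <-]] {n y}.
elim: p x hp => [|z p IH] x /=; first by move=> _; exact: walk0.
by case/andP=> hxz /IH hw; apply: walk_snoc hw _; rewrite r_sym.
Qed.

Lemma walk_chain (f : nat -> V) n :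
  (forall m, m < n -> r (f m) (f m.+1)) -> walk (f 0) (f n) n.
Proof.
elim: n => [|n IH] h; first exact: walk0.
by apply: walk_snoc (IH _) (h _ _) => // m hm; apply: h; lia.
Qed.

End Walks.

Lemma Hadj_sym (T : finType) E M (ed : 'I_E -> T * T) : symmetric (Hadj M ed).
Proof.
move=> [[a j]|[i k]] [[b j']|[i' k']] //=.
- case: (eqVneq j j') => [<-|_]; first by rewrite (eq_sym b) (orbC ((b, a) == ed j)).
  by rewrite (eq_sym b) (orbC (j'.+1 == j :> nat)).
- by rewrite (eq_sym i') (orbC (k'.+1 == k :> nat)).
Qed.

Section Degree.
Variables (T : finType) (E M : nat) (ed : 'I_E -> T * T).
Hypothesis ed_loopfree : forall i, (ed i).1 != (ed i).2.

Lemma card_le3 (V : finType) (A : {set V}) y1 y2 y3 :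
  {subset A <= [set y1; y2; y3]} -> #|A| <= 3.
Proof.
move/subsetP=> h; apply: leq_trans (subset_leq_card h) _.
by apply: leq_trans (leq_card_setU _ _) _; rewrite cards1 cards2; case: (_ != _).
Qed.

Lemma ord_step n (j j' : 'I_n) :
  (j.+1 == j' :> nat) || (j'.+1 == j :> nat) ->
  j' = insubd j j.+1 \/ j' = insubd j j.-1.
Proof.
have lt_j'n := ltn_ord j'; case/orP=> /eqP h; [left | right];
  by apply: val_inj; rewrite val_insubd; case: ifP => /=; lia.
Qed.

Definition opposite (j : 'I_E) (a : T) : T :=
  if a == (ed j).1 then (ed j).2 else (ed j).1.

Lemma opposite_end j a b : ((a, b) == ed j) || ((b, a) == ed j) -> b = opposite j a.
Proof.
rewrite /opposite; case: (ed j) (ed_loopfree j) => x y /= hxy.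
case/orP=> /eqP[-> ->]; first by rewrite eqxx.
by rewrite eq_sym (negbTE hxy).
Qed.

(* A short vertex (a,j) has its two short-path neighbours and one neighbour
   on the long path of e_j: the opposite endpoint if M = 1, the first or last
   internal vertex if M >= 2 (for M = 0 there are no long paths at all). *)
Lemma degree_short a j : #|[set y | Hadj M ed (inl (a, j)) y]| <= 3.
Proof.
case: M => [|[|M']].
- apply: (@card_le3 _ _ (inl (a, insubd j j.+1)) (inl (a, insubd j j.-1)) (inl (a, j))).
  move=> [[b j']|[i k]]; rewrite !inE /=; last by case: k.
  case/orP=> [/andP[/eqP <- /ord_step[]->]|]; first by rewrite eqxx.
    by rewrite eqxx orbT.
  by rewrite andbF.
- apply: (@card_le3 _ _ (inl (a, insubd j j.+1)) (inl (a, insubd j j.-1))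
                        (inl (opposite j a, j))).
  move=> [[b j']|[i k]]; rewrite !inE /=; last by case: k.
  case/orP=> [/andP[/eqP <- /ord_step[]->]|]; first by rewrite eqxx.
    by rewrite eqxx orbT.
  by case/andP=> /andP[/eqP <- _] /opposite_end <-; rewrite eqxx !orbT.
- apply: (@card_le3 _ _ (inl (a, insubd j j.+1)) (inl (a, insubd j j.-1))
                        (inr (j, if a == (ed j).1 then inord 0 else inord M'))).
  move=> [[b j']|[i k]]; rewrite !inE /=.
    case/orP=> [/andP[/eqP <- /ord_step[]->]|]; first by rewrite eqxx.
      by rewrite eqxx orbT.
    by rewrite andbF.
  case/andP=> /eqP -> /orP[/andP[/eqP -> /eqP hk]|/andP[/eqP -> /eqP hk]].
    by rewrite eqxx; apply/eqP; congr (inr (_, _)); apply: val_inj; rewrite /= inordK.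
  rewrite [_ == (ed j).1]eq_sym (negbTE (ed_loopfree j)); apply/eqP; congr (inr (_, _)).
  by apply: val_inj; rewrite /= inordK //; lia.
Qed.

Lemma degree_internal i k : #|[set y | Hadj M ed (inr (i, k)) y]| <= 3.
Proof.
apply: (@card_le3 _ _ (inr (i, insubd k k.+1))
  (if k == 0 :> nat then inl ((ed i).1, i) else inr (i, insubd k k.-1))
  (inl ((ed i).2, i))).
move=> [[b j']|[i' k']]; rewrite !inE /=.
  case/andP=> /eqP <- /orP[/andP[/eqP -> /eqP ->]|/andP[/eqP -> _]];
    by rewrite !eqxx ?orbT.
case/andP=> /eqP <- hk; have [->|ek] := ord_step hk; first by rewrite eqxx.
have k_pos : k != 0 :> nat by move: hk; rewrite ek val_insubd; case: ifP => /=; lia.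
by rewrite ek (negbTE k_pos) eqxx orbT.
Qed.

Lemma max_degree x : #|[set y | Hadj M ed x y]| <= 3.
Proof. by case: x => [[a j]|[i k]]; [apply: degree_short | apply: degree_internal]. Qed.

End Degree.

Section UpperBound.
Variables (T : finType) (e : rel T) (E M : nat) (ed : 'I_E -> T * T).
Hypothesis ed_surj : forall x y, e x y -> exists i, (ed i = (x, y)) \/ (ed i = (y, x)).
Hypothesis M_pos : 0 < M.

Let H := Hadj M ed.

Lemma short_walk a (j j' : 'I_E) : j <= j' -> walk H (inl (a, j)) (inl (a, j')) (j' - j).
Proof.
move=> le_jj'; have lt_j'E := ltn_ord j'.
pose f m := (inl (a, insubd j (j + m)) : HV T E M).
have := @walk_chain _ H f (j' - j).
rewrite /f addn0 subnKC // !valKd; apply=> m hm /=.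
by rewrite eqxx /= !val_insubd !ifT ?addnS ?eqxx //; lia.
Qed.

Lemma short_walk_lt a (j j' : 'I_E) :
  exists2 n, n < E & walk H (inl (a, j)) (inl (a, j')) n.
Proof.
have [lt_jE lt_j'E] := (ltn_ord j, ltn_ord j').
case: (leqP j j') => h; first by exists (j' - j); [lia | exact: short_walk].
exists (j - j'); first lia.
by apply: walk_rev (@Hadj_sym _ _ _ _) _ _ _ _; apply: short_walk; exact: ltnW.
Qed.

Lemma long_walk i : walk H (inl ((ed i).1, i)) (inl ((ed i).2, i)) M.
Proof.
rewrite /H; case: M M_pos => [//|[|M']] _.
  by apply: walk_cons (walk0 _ _); rewrite /= !eqxx /=; case: (ed i) => x y; rewrite eqxx orbT.
pose f m := (if m == 0 then inl ((ed i).1, i)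
             else if m == M'.+2 then inl ((ed i).2, i)
             else inr (i, inord m.-1)) : HV T E M'.+2.
have := @walk_chain _ (Hadj M'.+2 ed) f M'.+2; rewrite /f /= eqxx; apply.
case=> [|m] hm /=; first by rewrite !eqxx /= inordK.
rewrite ifF; last by apply/negbTE; rewrite eqSS; lia.
case: (eqVneq m M') => [->|hne] /=; first by rewrite !eqxx /= inordK // eqxx orbT.
rewrite ifF; last by apply/negbTE; rewrite !eqSS.
by rewrite /= eqxx !inordK /= ?eqxx //; lia.
Qed.

Lemma edge_walk (i0 : 'I_E) a z : e a z ->
  exists2 n, n <= 2 * E + M & walk H (inl (a, i0)) (inl (z, i0)) n.
Proof.
case/ed_surj=> i hi.
have [n1 hn1 w1] := short_walk_lt a i0 i.
have [n2 hn2 w2] := short_walk_lt z i i0.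
have across : walk H (inl (a, i)) (inl (z, i)) M.
  have := long_walk i; case: hi => -> //.
  exact: walk_rev (@Hadj_sym _ _ _ _) _ _ _.
by exists (n1 + M + n2); [lia | exact: walk_cat (walk_cat w1 across) w2].
Qed.

Lemma upper_walk (i0 : 'I_E) u v d : walk e u v d ->
  exists2 n, n <= (2 * E + M) * d & walk H (inl (u, i0)) (inl (v, i0)) n.
Proof.
move=> [p [<- hp <-]] {d v}.
elim: p u hp => [|z p IH] u /=; first by exists 0 => //; exact: walk0.
case/andP=> huz /IH[n hn wn].
have [m hm wm] := edge_walk i0 huz.
by exists (m + n); [rewrite mulnS leq_add | exact: walk_cat wm wn].
Qed.

End UpperBound.

Section LowerBound.
Variables (T : finType) (e : rel T) (E M : nat) (ed : 'I_E -> T * T).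
Hypothesis e_sym : symmetric e.
Hypothesis ed_edge : forall i, e (ed i).1 (ed i).2.
Variable b : T.

Definition scaled_reach (c : T) (n : nat) : Prop :=
  exists2 k, walk e c b k & M * k <= n.

Lemma scaled_reach_mono c m n : m <= n -> scaled_reach c m -> scaled_reach c n.
Proof. by move=> h [k hw hk]; exists k => //; apply: leq_trans h. Qed.

Lemma scaled_reach_edge c c' n : e c c' -> scaled_reach c' n -> scaled_reach c (n + M).
Proof.
by move=> h [k hw hk]; exists k.+1; [exact: walk_cons hw | rewrite mulnS addnC leq_add2r].
Qed.

(* The potential of a vertex of H with budget n: the k-th internal vertex of
   the long path of e_i is k+1 steps from (ed i).1 and M-k-1 from (ed i).2. *)
Definition potential (x : HV T E M) (n : nat) : Prop :=
  match x with
  | inl (a, _) => scaled_reach a n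
  | inr (i, k) => scaled_reach (ed i).1 (n + k.+1) /\
                  scaled_reach (ed i).2 (n + (M - k.+1))
  end.

Lemma potential_step x y n : Hadj M ed x y -> potential y n -> potential x n.+1.
Proof.
have e21 i : e (ed i).2 (ed i).1 by rewrite e_sym.
case: x => [[a j]|[i k]]; case: y => [[a' j']|[i' k']] /=.
- case/orP => [/andP[/eqP -> _] hW|/andP[/andP[_ /eqP hM] hend]].
    exact: scaled_reach_mono hW.
  rewrite -addn1 -hM; apply: scaled_reach_edge.
  by case/orP: hend => /eqP hj; [have := ed_edge j | have := e21 j]; rewrite -hj.
- case/andP=> _ /orP[/andP[/eqP -> /eqP ->]|/andP[/eqP -> /eqP hk]] [h1 h2].
    by apply: scaled_reach_mono h1; rewrite addn1.
  by apply: scaled_reach_mono h2; lia.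
- have lt_k := ltn_ord k.
  case/andP=> /eqP _ /orP[/andP[/eqP -> /eqP hk0]|/andP[/eqP -> /eqP hk]] hW.
    split; first by apply: scaled_reach_mono hW; lia.
    by apply: scaled_reach_mono (scaled_reach_edge (e21 i) hW); lia.
  split; last by apply: scaled_reach_mono hW; lia.
  by apply: scaled_reach_mono (scaled_reach_edge (ed_edge i) hW); lia.
- have lt_k := ltn_ord k; have lt_k' := ltn_ord k'.
  case/andP=> /eqP <- /orP[]/eqP hkk [h1 h2];
    by split; [apply: scaled_reach_mono h1 | apply: scaled_reach_mono h2]; lia.
Qed.

Lemma lower_walk u j j' n : walk (Hadj M ed) (inl (u, j)) (inl (b, j')) n ->
  scaled_reach u n.
Proof.
move=> [p [<- hp hl]]; suff : potential (inl (u, j)) (size p) by [].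
elim: p (inl (u, j) : HV T E M) hp hl => [|y p IH] x /=.
  by move=> _ ->; exists 0; [exact: walk0 | rewrite muln0].
by case/andP=> hxy hp hl; apply: potential_step hxy (IH _ hp hl).
Qed.

End LowerBound.

Theorem mainTheorem4 (T : finType) (e : rel T)
  (e_sym : symmetric e) (e_irr : irreflexive e)
  (e_conn : forall x y : T, connect e x y)
  (E : nat) (E_pos : 0 < E) (ed : 'I_E -> T * T)
  (ed_edge : forall i, e (ed i).1 (ed i).2)
  (ed_inj : forall i j, (ed i == ed j) || (ed i == ((ed j).2, (ed j).1)) -> i = j)
  (ed_surj : forall x y, e x y -> exists i, (ed i = (x, y)) \/ (ed i = (y, x)))
  (M : nat) (M_pos : 0 < M) (i0 : 'I_E) :
  (forall x : HV T E M, #|[set y | Hadj M ed x y]| <= 3) /\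
  (forall u v : T,
     M * dist e u v <= dist (Hadj M ed) (inl (u, i0)) (inl (v, i0)) /\
     dist (Hadj M ed) (inl (u, i0)) (inl (v, i0)) <= (2 * E + M) * dist e u v).
Proof.
have ed_loopfree i : (ed i).1 != (ed i).2.
  by apply/negP => /eqP h; have := ed_edge i; rewrite h e_irr.
split=> [x | u v]; first exact: (max_degree ed_loopfree x).
have wG : walk e u v (dist e u v).
  have /connectP[p hp hl] := e_conn u v.
  by apply: (@dist_walk _ _ _ _ (size p)); exists p; rewrite -hl.
have [n hn wH] := upper_walk ed_surj M_pos i0 wG.
split; last exact: leq_trans (dist_le wH) hn.
have [k hk hMk] := lower_walk e_sym ed_edge (dist_walk wH).
by apply: leq_trans hMk; rewrite leq_mul2l (dist_le hk) orbT.
Qed.
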